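(* Let $\langle \mathscr{A} \mid \mathscr{R} \rangle$ be a $C(4)$ presentation. Suppose $w = XYZw'$, where $XYZ$ is a relation word with $X$, $Y$, $Z$ respectively its maximal piece prefix, middle word and maximal piece suffix, and $XY$ is a clean overlap prefix of $w$. Let $p$ be a piece. Then $\rho(pw') < \rho(w)$.
   Context: A monoid presentation $\langle \mathscr{A} \mid \mathscr{R} \rangle$ consists of an alphabet $\mathscr{A}$ and a set $\mathscr{R} \subseteq \mathscr{A}^* \times \mathscr{A}^*$ of relations. A relation word is a word occurring as one side of a relation. A piece is a word which occurs as a factor of two distinct relation words, or in two different (possibly overlapping) positions within one relation word; the empty word is always a piece. The presentation is $C(n)$ if no relation word can be written as a product of strictly fewer than $n$ pieces. For a relation word $R$ in a $C(3)$ (or stronger) presentation write $R = X_R Y_R Z_R$ where $X_R$ is the longest prefix of $R$ which is a piece (maximal piece prefix), $Z_R$ is the longest suffix which is a piece (maximal piece suffix), and $Y_R$ is the remaining middle word. A relation prefix of a word $u$ is a prefix of $u$ of the form $aX_RY_R$ for some word $a$ and relation word $R$. An overlap prefix of $u$ is a relation prefix admitting a factorisation $b X_1 Y_1' X_2 Y_2' \cdots X_n Y_n$ where: $n \geq 1$; this prefix has no factor of the form $X_0Y_0$ ($X_0,Y_0$ the maximal piece prefix and middle word of some relation word) beginning before the end of $b$; for each $i$, $R_i = X_iY_iZ_i$ is a relation word with $X_i$, $Y_i$, $Z_i$ its maximal piece prefix, middle word and maximal piece suffix; and for $1 \leq i < n$, $Y_i'$ is a proper non-empty prefix of $Y_i$.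 A relation prefix $aXY$ of $u$ is clean if $u$ does not have a prefix $aXY'X_1Y_1$ where $X_1, Y_1$ are the maximal piece prefix and middle word of some relation word and $Y'$ is a proper non-empty prefix of $Y$. The function $\rho : \mathscr{A}^* \to \mathbb{Z}$ is defined by $\rho(w) = -1$ if $w$ has no clean overlap prefix, and otherwise $\rho(w)$ is the length of the suffix of $w$ following the clean overlap prefix. *)

From mathcomp Require Import all_boot all_order all_algebra.
From Stdlib Require Import ClassicalEpsilon.
Set Implicit Arguments. Unset Strict Implicit. Unset Printing Implicit Defensive.

Section Presentations.
Variable A : eqType.
Variable R : seq A * seq A -> Prop.

Definition word := seq A.

Definition relword (u : word) : Prop := exists v, R (u, v) \/ R (v, u).

Definition occurs_at (p u : word) (i : nat) : Prop :=
  exists x y, u = x ++ p ++ y /\ size x = i.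

Definition piece (p : word) : Prop :=
  p = [::] \/
  exists u v i j, relword u /\ relword v /\ occurs_at p u i /\ occurs_at p v j
                  /\ (u <> v \/ i <> j).

Definition Cn (n : nat) : Prop :=
  forall (u : word) (ps : seq word), relword u ->
    (forall q, q \in ps -> piece q) -> u = flatten ps -> n <= size ps.

Definition is_prefix (p u : word) : Prop := exists s, u = p ++ s.
Definition is_suffix (p u : word) : Prop := exists s, u = s ++ p.

Definition max_piece_prefix (r X : word) : Prop :=
  is_prefix X r /\ piece X /\
  forall X', is_prefix X' r -> piece X' -> size X' <= size X.

Definition max_piece_suffix (r Z : word) : Prop :=
  is_suffix Z r /\ piece Z /\
  forall Z', is_suffix Z' r -> piece Z' -> size Z' <= size Z.

Definition xyz (X Y Z : word) : Prop :=
  relword (X ++ Y ++ Z) /\ max_piece_prefix (X ++ Y ++ Z) X /\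
  max_piece_suffix (X ++ Y ++ Z) Z.

(* words of the form X_1 Y_1' X_2 Y_2' ... X_n Y_n  (n >= 1) *)
Inductive ochain : word -> Prop :=
| och_last X Y Z : xyz X Y Z -> ochain (X ++ Y)
| och_cons X Y Z Y' t rest :
    xyz X Y Z -> Y' <> [::] -> t <> [::] -> Y = Y' ++ t ->
    ochain rest -> ochain (X ++ Y' ++ rest).

Definition overlap_prefix (u v : word) : Prop :=
  is_prefix v u /\
  exists b c, v = b ++ c /\ ochain c /\
    (forall X0 Y0 Z0, xyz X0 Y0 Z0 ->
       forall x y, v = x ++ (X0 ++ Y0) ++ y -> size b <= size x).

Definition clean (u a X Y : word) : Prop :=
  ~ exists Y' t X1 Y1 Z1 s,
      Y = Y' ++ t /\ Y' <> [::] /\ t <> [::] /\ xyz X1 Y1 Z1 /\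
      u = a ++ X ++ Y' ++ X1 ++ Y1 ++ s.

Definition clean_overlap_prefix (u v : word) : Prop :=
  overlap_prefix u v /\
  exists a X Y Z, xyz X Y Z /\ v = a ++ X ++ Y /\ clean u a X Y.

Definition pbool (P : Prop) : bool :=
  if excluded_middle_informative P then true else false.

Definition has_cop (w : word) : Prop :=
  exists k, clean_overlap_prefix w (take k w) /\ k <= size w.

(* rho w = -1 if w has no clean overlap prefix, otherwise the length of the
   suffix following the clean overlap prefix (the shortest one, should there
   be several) *)
Definition rho (w : word) : int :=
  match excluded_middle_informative (has_cop w) with
  | left H =>
      Posz (size w - @ex_minn (fun k => pbool (clean_overlap_prefix w (take k w)
                                              /\ k <= size w))
                     (let: ex_intro k Hk := H in
                      ex_intro _ k (match excluded_middle_informative _ as e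
                                     return (if e then true else false) = true
                                    with left _ => erefl | right n => False_ind _ (n Hk) end)))
  | right _ => (-1)%R
  end.

End Presentations.

(* A clean overlap prefix of w ends with the relation prefix X Y, so
   rho(w) >= |Z w'|. On the other hand, a relation prefix a X1 Y1 of p w'
   cannot end inside the piece p: otherwise X1 Y1 would be a piece and the
   relation word X1 Y1 Z1 a product of two pieces, contradicting C(3). Hence
   either p w' has no clean overlap prefix, or the suffix after it is a
   proper suffix of w'; in both cases rho(p w') < |w'| <= rho(w). *)
From mathcomp Require Import all_boot all_order all_algebra.
From Stdlib Require Import ClassicalEpsilon.
From mathcomp Require Import zify.

Import Order.POrderTheory.

Set Implicit Arguments.
Unset Strict Implicit.
Unset Printing Implicit Defensive.

Lemma pboolP (P : Prop) : reflect P (pbool P).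
Proof. by rewrite /pbool; case: excluded_middle_informative => H; constructor. Qed.

Section Presentation.
Variables (A : eqType) (R : seq A * seq A -> Prop).

Lemma CnW m n : m <= n -> Cn R n -> Cn R m.
Proof. by move=> le_mn HCn u ps Hu Hps Eu; exact: leq_trans le_mn (HCn u ps Hu Hps Eu). Qed.

Lemma piece_infix (p c q d : seq A) : piece R p -> p = c ++ q ++ d -> piece R q.
Proof.
case=> [->|[u [v [i [j [Hu [Hv [[x1 [y1 [Eu <-]]] [[x2 [y2 [Ev <-]]] Hneq]]]]]]]]] Ep.
  by left; case: q Ep => //; case: c.
right; exists u, v, (size (x1 ++ c)), (size (x2 ++ c)); do 2!split => //.
split; first by exists (x1 ++ c), (d ++ y1); rewrite Eu Ep !catA.
split; first by exists (x2 ++ c), (d ++ y2); rewrite Ev Ep !catA.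
by case: Hneq => [|Hij]; [left | right; rewrite !size_cat; lia].
Qed.

Lemma xyz_prefix_not_piece (X Y Z : seq A) :
  Cn R 3 -> xyz R X Y Z -> ~ piece R (X ++ Y).
Proof.
move=> HC3 [Hrel [_ [_ [HZ _]]]] HXY.
have Hps q : q \in [:: X ++ Y; Z] -> piece R q by rewrite !inE => /orP[/eqP->|/eqP->].
by have := HC3 _ _ Hrel Hps; rewrite /= cats0 catA => /(_ erefl).
Qed.

Lemma relation_prefix_longer_than_piece (p v a X Y Z : seq A) :
  Cn R 3 -> piece R p -> xyz R X Y Z -> is_prefix (a ++ X ++ Y) (p ++ v) ->
  size p < size (a ++ X ++ Y).
Proof.
move=> HC3 Hp Hxyz [s Epv]; rewrite ltnNge; apply/negP => le_p.
have Etake : take (size (a ++ X ++ Y)) p = a ++ X ++ Y.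
  by rewrite -(takel_cat v le_p) Epv take_size_cat.
have Ep : p = a ++ (X ++ Y) ++ drop (size (a ++ X ++ Y)) p.
  by rewrite catA -{1}Etake cat_take_drop.
exact: xyz_prefix_not_piece HC3 Hxyz (piece_infix Hp Ep).
Qed.

Lemma rho_has_cop (u : seq A) : has_cop R u ->
  exists m, [/\ clean_overlap_prefix R u (take m u), m <= size u,
    forall k, clean_overlap_prefix R u (take k u) -> k <= size u -> m <= k
    & rho R u = Posz (size u - m)].
Proof.
rewrite /rho; case: excluded_middle_informative => // Hu _.
case: ex_minnP => m /pboolP[Hcop le_m] Hmin; exists m; split => // k Hk le_k.
by apply: Hmin; apply/pboolP.
Qed.

Lemma rho_no_cop (u : seq A) : ~ has_cop R u -> rho R u = (-1)%R.
Proof. by rewrite /rho; case: excluded_middle_informative. Qed.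

Lemma rho_ge (u : seq A) k :
  clean_overlap_prefix R u (take k u) -> k <= size u -> (Posz (size u - k) <= rho R u)%R.
Proof.
move=> Hk le_k; have [|m [_ le_m Hmin ->]] := @rho_has_cop u; first by exists k.
by rewrite lez_nat leq_sub2l // Hmin.
Qed.

Lemma rho_lt (u : seq A) n :
  (forall k, clean_overlap_prefix R u (take k u) -> k <= size u -> n < k) ->
  (rho R u < Posz (size u - n))%R.
Proof.
move=> Hlong; have [Hu|Hu] := pboolP (has_cop R u); last by rewrite rho_no_cop.
have [m [Hm le_m _ ->]] := @rho_has_cop u Hu.
by rewrite ltz_nat; have := Hlong m Hm le_m; lia.
Qed.

Lemma cop_longer_than_piece (p v : seq A) k :
  Cn R 3 -> piece R p -> clean_overlap_prefix R (p ++ v) (take k (p ++ v)) ->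
  k <= size (p ++ v) -> size p < k.
Proof.
move=> HC3 Hp [_ [a [X [Y [Z [Hxyz [Ek _]]]]]]] le_k.
have Hpre : is_prefix (a ++ X ++ Y) (p ++ v).
  by exists (drop k (p ++ v)); rewrite -Ek cat_take_drop.
have := relation_prefix_longer_than_piece HC3 Hp Hxyz Hpre.
by rewrite -Ek size_take_min; lia.
Qed.

End Presentation.

Theorem lemma2 (A : eqType) (R : seq A * seq A -> Prop) (HC4 : Cn R 4)
    (w w' X Y Z p : seq A) :
  xyz R X Y Z ->
  w = X ++ Y ++ Z ++ w' ->
  overlap_prefix R w (X ++ Y) ->
  clean R w [::] X Y ->
  piece R p ->
  (rho R (p ++ w') < rho R w)%R.
Proof.
move=> Hxyz Ew Hov Hcl Hp.
have HC3 : Cn R 3 := CnW (isT : 3 <= 4) HC4.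
have Etake : take (size (X ++ Y)) w = X ++ Y by rewrite Ew catA take_size_cat.
have Hcop : clean_overlap_prefix R w (take (size (X ++ Y)) w).
  by rewrite Etake; split=> //; exists [::], X, Y, Z.
have le_XY : size (X ++ Y) <= size w by rewrite Ew !size_cat; lia.
have Hge := rho_ge Hcop le_XY.
have Hlt := rho_lt (u := p ++ w') (fun k => cop_longer_than_piece HC3 Hp).
apply: (lt_le_trans Hlt); apply: le_trans Hge.
by rewrite lez_nat Ew !size_cat; lia.
Qed.
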